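(* Let $\mathcal{H}$ and $\mathcal{G}$ be Sperner hypergraphs on the same vertex set $V$ with $\mathcal{G}\subseteq Tr(\mathcal{H})$ and $\mathcal{H}\subseteq Tr(\mathcal{G})$, and let $k\in\mathbb{N}$. Consider the following procedure. (1) For each $k$-trace $(T,S)$ on $V$ with $(T,S)\notin\mathrm{traces}_k(\mathcal{H})$: if there exists $E\in Tr(\mathcal{G})$ realizing $(T,S)$, return such an $E$. (2) For each $E\in\mathrm{ext}_k(\mathcal{H})$ that is not contained in any hyperedge of $\mathcal{H}$: if $E\in Tr(\mathcal{G})$, return $E$. (3) Return ''Yes''. Then this procedure returns ''Yes'' if $Tr(\mathcal{G})=\mathcal{H}$, and otherwise returns a set $E\in Tr(\mathcal{G})\setminus\mathcal{H}$.
   Context: A hypergraph on $V$ is a family of subsets (hyperedges) of $V$; it is Sperner if no hyperedge contains another. A transversal meets every hyperedge; $Tr(\cdot)$ denotes the hypergraph of inclusion-minimal transversals. A $k$-trace on $V$ is a pair $(T,S)$ with $S\subseteq V$, $|S|=k$, $T\subseteq S$; a set $F$ realizes it if $F\cap S=T$. $\mathrm{traces}_k(F)$ is the set of $k$-traces realized by $F$, and $\mathrm{traces}_k(\mathcal{H})=\bigcup_{F\in\mathcal{H}}\mathrm{traces}_k(F)$. $\mathrm{ext}_k(\mathcal{H})$ is the hypergraph on $V$ consisting of all $E\subseteq V$ with $\mathrm{traces}_k(E)\subseteq\mathrm{traces}_k(\mathcal{H})$. *)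

From mathcomp Require Import all_boot.
Set Implicit Arguments. Unset Strict Implicit. Unset Printing Implicit Defensive.

Section Hyper.
Variable V : finType.
Notation hyp := {set {set V}}.

Definition Sperner (H : hyp) : Prop :=
  forall E F, E \in H -> F \in H -> E \subset F -> E = F.

Definition transversal (H : hyp) (E : {set V}) : bool :=
  [forall F in H, E :&: F != set0].

Definition Tr (H : hyp) : hyp := [set E | minset (transversal H) E].

Definition ktrace (k : nat) (p : {set V} * {set V}) : bool :=
  (#|p.2| == k) && (p.1 \subset p.2).

Definition realizes (F : {set V}) (p : {set V} * {set V}) : bool :=
  F :&: p.2 == p.1.

Definition traces (k : nat) (F : {set V}) : {set {set V} * {set V}} :=
  [set p | ktrace k p && realizes F p].

Definition tracesH (k : nat) (H : hyp) : {set {set V} * {set V}} :=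
  \bigcup_(F in H) traces k F.

Definition ext (k : nat) (H : hyp) : hyp :=
  [set E | traces k E \subset tracesH k H].

(* Possible outputs of the procedure: Some E = "return E", None = "Yes".
   Step (1) iterates over the k-traces in an unspecified order and returns an
   unspecified realizer; step (2) likewise; all choices are allowed. *)
Inductive procedure_output (H G : hyp) (k : nat) : option {set V} -> Prop :=
| Step1_return (p : {set V} * {set V}) (E : {set V}) :
    ktrace k p -> p \notin tracesH k H -> E \in Tr G -> realizes E p ->
    procedure_output H G k (Some E)
| Step2_return (E : {set V}) :
    (forall p E', ktrace k p -> p \notin tracesH k H -> E' \in Tr G ->
        ~~ realizes E' p) ->
    E \in ext k H -> (forall F, F \in H -> ~~ (E \subset F)) -> E \in Tr G ->
    procedure_output H G k (Some E)
| Step3_yes :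
    (forall p E', ktrace k p -> p \notin tracesH k H -> E' \in Tr G ->
        ~~ realizes E' p) ->
    (forall E, E \in ext k H -> (forall F, F \in H -> ~~ (E \subset F)) ->
        E \notin Tr G) ->
    procedure_output H G k None.
End Hyper.

From mathcomp Require Import all_boot.

Set Implicit Arguments.
Unset Strict Implicit.

(* Only [H \subset Tr G] matters. A set returned in step (1) realizes a trace
   that no hyperedge of H realizes, so it is not in H; one returned in step (2)
   is contained in no hyperedge, so it is not in H either. Conversely, if both
   steps fail, every E in Tr G lies in ext_k(H) (else step (1) would find it),
   hence is contained in some F in H (else step (2) would find it); as
   F is in Tr G, which is Sperner, E = F is in H. *)

Section Procedure.
Variable V : finType.
Implicit Types (H G : {set {set V}}) (E F : {set V}) (p : {set V} * {set V}).

Lemma Tr_Sperner G : Sperner (Tr G).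
Proof.
by move=> E F; rewrite !inE => /minsetP[tE _] /minsetP[_ minF]; apply: minF.
Qed.

Lemma extP k H E :
  reflect (forall p, ktrace k p -> realizes E p -> p \in tracesH k H)
          (E \in ext k H).
Proof.
rewrite inE; apply: (iffP subsetP) => [extE p kp rEp | extE p].
  by apply: extE; rewrite inE kp rEp.
by rewrite inE => /andP[kp rEp]; apply: extE.
Qed.

Lemma sub_ext k H : H \subset ext k H.
Proof.
apply/subsetP => E EH; apply/extP => p kp rEp.
by apply/bigcupP; exists E; rewrite // inE kp rEp.
Qed.

Lemma realizes_untraced_notin k H E p :
  ktrace k p -> p \notin tracesH k H -> realizes E p -> E \notin H.
Proof.
move=> kp np rEp; apply: contraNN np => EH.
exact: extP (subsetP (sub_ext k H) E EH) p kp rEp.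
Qed.

Definition no_step1_return H G k : Prop :=
  forall p E, ktrace k p -> p \notin tracesH k H -> E \in Tr G ->
    ~~ realizes E p.

Definition no_step2_return H G k : Prop :=
  forall E, E \in ext k H -> (forall F, F \in H -> ~~ (E \subset F)) ->
    E \notin Tr G.

Lemma Tr_sub_of_no_return H G k :
  H \subset Tr G -> no_step1_return H G k -> no_step2_return H G k ->
  Tr G \subset H.
Proof.
move=> HTrG no1 no2; apply/subsetP => E TrG_E.
have extE : E \in ext k H.
  apply/extP => p kp rEp; apply: contraLR rEp => np.
  exact: (no1 _ _ kp np TrG_E).
have [/exists_inP[F FH sEF] | noF] := boolP [exists F in H, E \subset F].
  by rewrite (Tr_Sperner TrG_E (subsetP HTrG F FH) sEF).
apply: contraLR TrG_E => _; apply: (no2 _ extE) => F FH.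
by apply: contraNN noF => sEF; apply/exists_inP; exists F.
Qed.

Lemma procedure_output_exists H G k : exists r, procedure_output H G k r.
Proof.
have [/existsP[p /existsP[E /and4P[kp np TrG_E rEp]]] | no1] :=
  boolP [exists p, exists E,
           [&& ktrace k p, p \notin tracesH k H, E \in Tr G & realizes E p]].
  by exists (Some E); apply: Step1_return kp np TrG_E rEp.
have {}no1 : no_step1_return H G k.
  move=> p E kp np TrG_E; apply: contraNN no1 => rEp.
  by apply/existsP; exists p; apply/existsP; exists E; rewrite kp np TrG_E rEp.
have [/existsP[E /and3P[extE /forall_inP notsub TrG_E]] | no2] :=
  boolP [exists E, [&& E \in ext k H, [forall F in H, ~~ (E \subset F)]
                     & E \in Tr G]].
  by exists (Some E); apply: Step2_return.
exists None; apply: Step3_yes => // E extE notsub.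
apply: contraNN no2 => TrG_E; apply/existsP; exists E.
by rewrite extE TrG_E andbT; apply/forall_inP.
Qed.

Lemma procedure_output_Some H G k r E :
  procedure_output H G k r -> r = Some E -> E \in Tr G :\: H.
Proof.
case=> [p E' kp np TrG_E rEp | E' _ _ notsub TrG_E | //] [<-];
  rewrite inE TrG_E andbT.
- exact: realizes_untraced_notin kp np rEp.
- by apply: contraTN (subxx E') => EH; apply: notsub.
Qed.

Lemma procedure_output_None H G k r :
  H \subset Tr G -> procedure_output H G k r -> r = None -> Tr G = H.
Proof.
move=> HTrG; case=> // no1 no2 _; apply/eqP.
by rewrite eqEsubset HTrG andbT (Tr_sub_of_no_return HTrG no1 no2).
Qed.

End Procedure.

Theorem theorem2 (V : finType) (H G : {set {set V}}) (k : nat) :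
  Sperner H -> Sperner G -> G \subset Tr H -> H \subset Tr G ->
  (exists r, procedure_output H G k r) /\
  (forall r, procedure_output H G k r ->
     (r = None <-> Tr G = H) /\
     (forall E, r = Some E -> E \in Tr G :\: H)).
Proof.
move=> _ _ _ HTrG; split=> [|r out]; first exact: procedure_output_exists.
split=> [|E]; last exact: procedure_output_Some out.
split=> [|eqTrG]; first exact: procedure_output_None out.
case: r out => // E out; have := procedure_output_Some out (erefl _).
by rewrite eqTrG setDv inE.
Qed.
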